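(* Let $\mathcal C=\mathcal C(I,A,(\rho_i)_{i\in I},(C^a)_{a\in A})$ be a connected Cartan scheme and $\mathcal R=\mathcal R(\mathcal C,(R^a)_{a\in A})$ a root system of type $\mathcal C$. Let $a\in A$ and $i,j\in I$ with $i\neq j$. The following are equivalent: (1) $c^a_{ij}=c^a_{ji}=-1$; (2) $R^a\cap(\mathbb N_0\alpha_i+\mathbb N_0\alpha_j)=\{\alpha_i,\alpha_i+\alpha_j,\alpha_j\}$; (3) $m^a_{i,j}=3$.
   Context: Let $I$ be a nonempty finite set and $\{\alpha_i\mid i\in I\}$ the standard basis of $\mathbb Z^I$; $\mathbb N_0=\{0,1,2,\dots\}$. A generalized Cartan matrix is $C=(c_{ij})_{i,j\in I}\in\mathbb Z^{I\times I}$ with $c_{ii}=2$, $c_{jk}\le0$ for $j\ne k$, and $c_{ij}=0\Rightarrow c_{ji}=0$. A Cartan scheme $\mathcal C=\mathcal C(I,A,(\rho_i)_{i\in I},(C^a)_{a\in A})$ consists of a nonempty set $A$, maps $\rho_i:A\to A$ and generalized Cartan matrices $C^a=(c^a_{jk})_{j,k\in I}$ such that (C1) $\rho_i^2=\mathrm{id}$ and (C2) $c^a_{ij}=c^{\rho_i(a)}_{ij}$ for all $a\in A$, $i,j\in I$. It is connected if the group generated by the $\rho_i$ acts transitively on $A$. For $i\in I$, $a\in A$ let $\sigma_i^a\in\mathrm{Aut}(\mathbb Z^I)$, $\sigma_i^a(\alpha_j)=\alpha_j-c^a_{ij}\alpha_i$. A root system of type $\mathcal C$ is a family $\mathcal R=\mathcal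 R(\mathcal C,(R^a)_{a\in A})$ of subsets $R^a\subset\mathbb Z^I$ such that, writing $R^a_+=R^a\cap\mathbb N_0^I$ and $m^a_{i,j}=|R^a\cap(\mathbb N_0\alpha_i+\mathbb N_0\alpha_j)|$, for all $a\in A$, $i,j\in I$: (R1) $R^a=R^a_+\cup(-R^a_+)$; (R2) $R^a\cap\mathbb Z\alpha_i=\{\alpha_i,-\alpha_i\}$; (R3) $\sigma_i^a(R^a)=R^{\rho_i(a)}$; (R4) if $i\neq j$ and $m^a_{i,j}$ is finite then $(\rho_i\rho_j)^{m^a_{i,j}}(a)=a$. *)

From mathcomp Require Import all_boot all_order all_algebra.
Set Implicit Arguments. Unset Strict Implicit. Unset Printing Implicit Defensive.
Import GRing.Theory Num.Theory.
Local Open Scope ring_scope.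

Notation vec I := {ffun I -> int}.

Definition alpha (I : finType) (i : I) : vec I :=
  [ffun k => if k == i then 1 else 0].

Definition nonneg_vec (I : finType) (v : vec I) : Prop := forall k, 0 <= v k.

Definition in_cone (I : finType) (i j : I) (v : vec I) : Prop :=
  exists p q : nat, v = alpha i *+ p + alpha j *+ q.

Definition card_eq (I : finType) (P : vec I -> Prop) (n : nat) : Prop :=
  exists s : seq (vec I), [/\ uniq s, size s = n & forall v, v \in s <-> P v].

Definition gen_cartan (I : finType) (c : I -> I -> int) : Prop :=
  [/\ forall i, c i i = 2,
      forall j k, j != k -> c j k <= 0
    & forall i j, c i j = 0 -> c j i = 0].

Definition cartan_scheme (I : finType) (A : Type)
  (rho : I -> A -> A) (C : A -> I -> I -> int) : Prop :=
  [/\ forall a, gen_cartan (C a),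
      forall i a, rho i (rho i a) = a
    & forall a i j, C a i j = C (rho i a) i j].

(* connected: the group generated by the rho_i acts transitively on A
   (since rho_i are involutions, the group elements are words in the rho_i) *)
Definition connected_scheme (I : finType) (A : Type) (rho : I -> A -> A) : Prop :=
  forall a b : A, exists w : seq I, foldr (fun i x => rho i x) a w = b.

(* sigma_i^a : alpha_j |-> alpha_j - c^a_ij alpha_i, extended Z-linearly *)
Definition sigma (I : finType) (A : Type) (C : A -> I -> I -> int)
  (i : I) (a : A) (v : vec I) : vec I :=
  v - alpha i *~ (\sum_(j : I) v j * C a i j).

Definition m_eq (I : finType) (A : Type) (R : A -> vec I -> Prop)
  (a : A) (i j : I) (n : nat) : Prop :=
  card_eq (fun v => R a v /\ in_cone i j v) n.

Definition root_system (I : finType) (A : Type)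
  (rho : I -> A -> A) (C : A -> I -> I -> int) (R : A -> vec I -> Prop) : Prop :=
  [/\ forall a v, R a v <->
          (R a v /\ nonneg_vec v) \/ (exists w, (R a w /\ nonneg_vec w) /\ v = - w),
      forall a i v, (R a v /\ exists k : int, v = alpha i *~ k) <->
          (v = alpha i \/ v = - alpha i),
      forall a i v, R (rho i a) v <-> exists w, R a w /\ sigma C i a w = v
    & forall a i j n, i != j -> m_eq R a i j n ->
          iter n (fun b => rho i (rho j b)) a = a].

From mathcomp Require Import all_boot all_order all_algebra.
From mathcomp Require Import zify ring.
Set Implicit Arguments. Unset Strict Implicit.
Import Order.TTheory GRing.Theory Num.Theory.
Local Open Scope ring_scope.

(* Write a root of R^a in the cone as p alpha_i + q alpha_j.  Since sigma_i^a
   maps it to a root, and roots are positive or negative, q > 0 forces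
   p <= -q c_ij (and symmetrically); and sigma_i^{rho_i a} alpha_j shows that
   alpha_j - c_ij alpha_i is a root.  If c_ij = c_ji = -1 these give p = q, and
   sigma_i sends p (alpha_i + alpha_j) to p alpha_j, so p = 1.  Conversely the
   string root alpha_j - c_ij alpha_i pins down c_ij, and a count shows that
   three roots occur only when c_ij = c_ji = -1: a zero entry leaves just
   alpha_i, alpha_j, otherwise alpha_i, alpha_j, alpha_j - c_ij alpha_i and
   alpha_i - c_ji alpha_j are four distinct roots.  The argument is local at a. *)

Definition vec2 (I : finType) (i j : I) (x y : int) : vec I :=
  alpha i *~ x + alpha j *~ y.

Definition A2_positive (I : finType) (i j : I) (v : vec I) : Prop :=
  v = alpha i \/ v = alpha i + alpha j \/ v = alpha j.

Section Plane.

Variables (I : finType) (i j : I).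
Hypothesis ij : i != j.

Lemma vec2E (x y : int) k : vec2 i j x y k = (k == i)%:R * x + (k == j)%:R * y.
Proof.
rewrite /vec2 ffunE !ffunMzE /alpha !ffunE.
by case: (k == i); case: (k == j); rewrite ?mul0r ?mul1r ?mul0rz ?intz.
Qed.

Lemma vec2_i x y : vec2 i j x y i = x.
Proof. by rewrite vec2E eqxx (negbTE ij) mul1r mul0r addr0. Qed.

Lemma vec2_j x y : vec2 i j x y j = y.
Proof. by rewrite vec2E eqxx eq_sym (negbTE ij) mul1r mul0r add0r. Qed.

Lemma vec2_inj x y x' y' : vec2 i j x y = vec2 i j x' y' -> x = x' /\ y = y'.
Proof.
move=> E; split.
  by have := congr1 (fun f : vec I => f i) E; rewrite /= !vec2_i.
by have := congr1 (fun f : vec I => f j) E; rewrite /= !vec2_j.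
Qed.

Lemma sum_vec2 x y (c : I -> int) :
  \sum_k vec2 i j x y k * c k = x * c i + y * c j.
Proof.
rewrite (bigD1 i) //= (bigD1 j) /=; last by rewrite eq_sym.
rewrite big1 ?addr0; first by rewrite vec2_i vec2_j.
by move=> k /andP [ki kj]; rewrite vec2E (negbTE ki) (negbTE kj) /=; ring.
Qed.

Lemma sigma_vec2 (A : Type) (C : A -> I -> I -> int) a x y :
  sigma C i a (vec2 i j x y) = vec2 i j (x - (x * C a i i + y * C a i j)) y.
Proof. by rewrite /sigma sum_vec2 /vec2 mulrzBr addrAC. Qed.

End Plane.

Lemma vec2C (I : finType) (i j : I) x y : vec2 i j x y = vec2 j i y x.
Proof. by rewrite /vec2 addrC. Qed.

Lemma vec2_10 (I : finType) (i j : I) : vec2 i j 1 0 = alpha i.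
Proof. by rewrite /vec2 mulr1z mulr0z addr0. Qed.

Lemma vec2_01 (I : finType) (i j : I) : vec2 i j 0 1 = alpha j.
Proof. by rewrite /vec2 mulr1z mulr0z add0r. Qed.

Lemma vec2_0z (I : finType) (i j : I) x : vec2 i j 0 x = alpha j *~ x.
Proof. by rewrite /vec2 mulr0z add0r. Qed.

Lemma vec2_11 (I : finType) (i j : I) : vec2 i j 1 1 = alpha i + alpha j.
Proof. by rewrite /vec2 !mulr1z. Qed.

Lemma in_coneP (I : finType) (i j : I) v :
  in_cone i j v <-> exists p q : int, [/\ 0 <= p, 0 <= q & v = vec2 i j p q].
Proof.
split; first by move=> [p [q ->]]; exists p%:Z, q%:Z.
by move=> [[p|p] [[q|q] []]] // _ _ ->; exists p, q.
Qed.

Lemma in_coneC (I : finType) (i j : I) v : in_cone j i v <-> in_cone i j v.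
Proof. by split=> -[p [q ->]]; exists q, p; rewrite addrC. Qed.

Lemma A2_positiveC (I : finType) (i j : I) v : A2_positive j i v <-> A2_positive i j v.
Proof. by rewrite /A2_positive addrC; split=> [[->|[->|->]]|[->|[->|->]]]; auto. Qed.

Lemma A2_roots_m3 (I : finType) (A : Type) (R : A -> vec I -> Prop) a (i j : I) :
  i != j ->
  (forall v, R a v /\ in_cone i j v <-> A2_positive i j v) -> m_eq R a i j 3.
Proof.
move=> ij H; exists [:: alpha i; alpha i + alpha j; alpha j]; split => //.
  rewrite -(vec2_11 i j) -(vec2_10 i j) -(vec2_01 i j) /= !inE !negb_or !andbT.
  by repeat (apply/andP; split); apply/eqP => /(vec2_inj ij) [] e1 e2; lia.
move=> v; rewrite H /A2_positive !inE; split.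
  by move=> /orP [/eqP ->|/orP [/eqP ->|/eqP ->]]; auto.
by move=> [->|[->|->]]; rewrite eqxx ?orbT.
Qed.

Section RootSystem.

Variables (I : finType) (A : Type) (rho : I -> A -> A).
Variables (C : A -> I -> I -> int) (R : A -> vec I -> Prop).
Hypotheses (schemeC : cartan_scheme rho C) (rootsR : root_system rho C R).

Lemma cartan_diag a k : C a k k = 2.
Proof. by case: schemeC => /(_ a) []. Qed.

Lemma cartan_offdiag_le0 a (k l : I) : k != l -> C a k l <= 0.
Proof. by case: schemeC => /(_ a) [_ offdiag _] _ _; apply: offdiag. Qed.

Lemma root_alpha a k : R a (alpha k).
Proof. by case: rootsR => _ R2 _ _; have [_ /(_ (or_introl erefl)) []] := R2 a k (alpha k). Qed.

Lemma root_sign a v : R a v -> (forall k, 0 <= v k) \/ (forall k, v k <= 0).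
Proof.
case: rootsR => R1 _ _ _ /R1 [[_ nv]|[w [[_ nw] ->]]]; [by left | right => k].
by rewrite ffunE oppr_le0.
Qed.

Lemma root_not_mixed a v (k l : I) : R a v -> v k < 0 -> 0 < v l -> False.
Proof.
move=> /root_sign [H|H] vk vl; first by have := H k; rewrite leNgt vk.
by have := H l; rewrite leNgt vl.
Qed.

Lemma root_mulz_alpha a k x : R a (alpha k *~ x) -> x = 1 \/ x = -1.
Proof.
case: rootsR => _ R2 _ _ Rx.
have [/(_ (conj Rx (ex_intro _ x erefl)))] := R2 a k (alpha k *~ x).
by move=> [] /(congr1 (fun f : vec I => f k)); rewrite !ffunE ?ffunMzE ffunE eqxx intz; auto.
Qed.

Lemma root_sigma a k w : R a w -> R (rho k a) (sigma C k a w).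
Proof. by case: rootsR => _ _ R3 _ Rw; apply/R3; exists w. Qed.

(* By (C2), sigma_k^{rho_k a} = sigma_k^a, and (C1) sends rho_k a back to a. *)
Lemma root_sigma_rho a k w : R (rho k a) w -> R a (sigma C k a w).
Proof.
case: schemeC rootsR => _ C1 C2 [_ _ R3 _] Rw.
have -> : sigma C k a w = sigma C k (rho k a) w.
  by rewrite /sigma; congr (_ - _ *~ _); apply: eq_bigr => l _; rewrite -C2.
by rewrite -{1}(C1 k a); apply/(R3 (rho k a) k); exists w.
Qed.

Lemma root_string a (i j : I) : i != j -> R a (vec2 i j (- C a i j) 1).
Proof.
move=> ij; have := root_sigma_rho (root_alpha (rho i a) j).
by rewrite -(vec2_01 i) sigma_vec2 //; congr (R a (vec2 i j _ 1)); ring.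
Qed.

Lemma root_vec2_bound a (i j : I) p q : i != j ->
  R a (vec2 i j p q) -> 0 < q -> p <= - q * C a i j.
Proof.
move=> ij Rpq q0; have := root_sigma i Rpq; rewrite sigma_vec2 // cartan_diag.
move=> Rs; rewrite leNgt; apply/negP => pbig.
by apply: (root_not_mixed Rs (k := i) (l := j)); rewrite ?vec2_i ?vec2_j //; lia.
Qed.

Lemma positive_root_vec2 a (i j : I) p q : i != j ->
  R a (vec2 i j p q) -> 0 <= p -> 0 <= q ->
  [\/ p = 1 /\ q = 0, p = 0 /\ q = 1 |
      [/\ 0 < p, 0 < q, p <= - q * C a i j & q <= - p * C a j i]].
Proof.
move=> ij Rpq p0 q0; have ji : j != i by rewrite eq_sym.
have [pe|pn] := eqVneq p 0.
  move: Rpq; rewrite pe vec2_0z => /root_mulz_alpha [] q1; [by rewrite q1; constructor 2 | lia].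
have [qe|qn] := eqVneq q 0.
  move: Rpq; rewrite qe vec2C vec2_0z => /root_mulz_alpha [] p1; [by rewrite p1; constructor 1 | lia].
have [p_pos q_pos] : 0 < p /\ 0 < q by lia.
constructor 3; split => //; first exact: root_vec2_bound ij Rpq q_pos.
by rewrite vec2C in Rpq; apply: root_vec2_bound ji Rpq p_pos.
Qed.

Lemma cartan_m1_roots a (i j : I) : i != j ->
  C a i j = -1 -> C a j i = -1 ->
  forall v, R a v /\ in_cone i j v <-> A2_positive i j v.
Proof.
move=> ij cij cji v; split.
  move=> [Rv /in_coneP [p [q [p0 q0 Ev]]]]; rewrite {}Ev in Rv *.
  have [[-> ->]|[-> ->]|[pp qq pq qp]] := positive_root_vec2 ij Rv p0 q0.
  - by left; rewrite vec2_10.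
  - by right; right; rewrite vec2_01.
  have eqpq : q = p by rewrite cij cji in pq qp; lia.
  move: Rv; rewrite {}eqpq => /(root_sigma i); rewrite sigma_vec2 // cartan_diag cij.
  have -> : p - (p * 2 + p * -1) = 0 by ring.
  rewrite vec2_0z => /root_mulz_alpha [] p1; [by right; left; rewrite p1 vec2_11 | lia].
move=> [->|[->|->]]; split.
- exact: root_alpha.
- by apply/in_coneP; exists 1, 0; rewrite vec2_10.
- by rewrite -vec2_11; have := root_string a ij; rewrite cij opprK.
- by apply/in_coneP; exists 1, 1; rewrite vec2_11.
- exact: root_alpha.
- by apply/in_coneP; exists 0, 1; rewrite vec2_01.
Qed.

Lemma A2_roots_cartan a (i j : I) : i != j ->
  (forall v, R a v /\ in_cone i j v <-> A2_positive i j v) -> C a i j = -1.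
Proof.
move=> ij H; have cij := cartan_offdiag_le0 a ij.
have : A2_positive i j (vec2 i j (- C a i j) 1).
  apply/H; split; first exact: root_string.
  by apply/in_coneP; exists (- C a i j), 1; split => //; lia.
rewrite /A2_positive -(vec2_11 i j) -(vec2_10 i j) -(vec2_01 i j).
case=> [|[]] /(vec2_inj ij) [cij_val _]; try lia.
have [_ /(_ (or_intror (or_introl erefl))) [R11 _]] := H (alpha i + alpha j).
by move: R11; rewrite -vec2_11 => /(root_vec2_bound ij) /(_ ltr01); lia.
Qed.

Lemma cone_root_simple a (i j : I) v : i != j -> C a i j * C a j i = 0 ->
  R a v -> in_cone i j v -> v = alpha i \/ v = alpha j.
Proof.
move=> ij c0 Rv /in_coneP [p [q [p0 q0 Ev]]]; rewrite {}Ev in Rv *.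
have [[-> ->]|[-> ->]|[pp qq pq qp]] := positive_root_vec2 ij Rv p0 q0.
- by left; rewrite vec2_10.
- by right; rewrite vec2_01.
by move/eqP: c0; rewrite mulf_eq0 => /orP [] /eqP c0; rewrite c0 in pq qp; lia.
Qed.

Lemma m3_cartan a (i j : I) : i != j -> m_eq R a i j 3 -> C a i j = -1 /\ C a j i = -1.
Proof.
move=> ij [s [uniq_s size_s mem_s]]; have ji : j != i by rewrite eq_sym.
have in_s p q : 0 <= p -> 0 <= q -> R a (vec2 i j p q) -> vec2 i j p q \in s.
  by move=> p0 q0 Rpq; apply/mem_s; split => //; apply/in_coneP; exists p, q.
have cij := cartan_offdiag_le0 a ij; have cji := cartan_offdiag_le0 a ji.
have [c0|cij_neg] := eqVneq (C a i j * C a j i) 0.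
  suff : (size s <= size [:: alpha i; alpha j])%N by rewrite size_s.
  apply: uniq_leq_size uniq_s _ => v /mem_s [Rv /(cone_root_simple ij c0 Rv)].
  by case=> ->; rewrite !inE eqxx ?orbT.
have [/andP [/eqP -> /eqP ->] //|not_both] :=
  boolP ((C a i j == -1) && (C a j i == -1)).
suff : (size [:: vec2 i j 1 0; vec2 i j 0 1; vec2 i j (- C a i j) 1;
                 vec2 i j 1 (- C a j i)] <= size s)%N by rewrite size_s.
have cij' : C a i j < 0.
  by rewrite lt_neqAle cij andbT; apply: contraNneq cij_neg => ->; rewrite mul0r.
have cji' : C a j i < 0.
  by rewrite lt_neqAle cji andbT; apply: contraNneq cij_neg => ->; rewrite mulr0.
apply: uniq_leq_size.
  rewrite /= !inE !negb_or !andbT; repeat (apply/andP; split);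
    apply/eqP => /(vec2_inj ij) [] e1 e2; lia.
move=> v; rewrite !inE => /orP [/eqP ->|/orP [/eqP ->|/orP [/eqP ->|/eqP ->]]].
- by apply: in_s; rewrite // vec2_10; apply: root_alpha.
- by apply: in_s; rewrite // vec2_01; apply: root_alpha.
- by apply: in_s; [lia | done | exact: root_string].
- by apply: in_s; [done | lia | rewrite vec2C; exact: root_string].
Qed.

End RootSystem.

Theorem lemma4p8 (I : finType) (A : Type) (rho : I -> A -> A)
  (C : A -> I -> I -> int) (R : A -> vec I -> Prop) :
  cartan_scheme rho C -> connected_scheme rho -> root_system rho C R ->
  forall (a : A) (i j : I), i != j ->
  ((C a i j = -1 /\ C a j i = -1) <->
     (forall v, R a v /\ in_cone i j v <->
        v = alpha i \/ v = alpha i + alpha j \/ v = alpha j)) /\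
  ((forall v, R a v /\ in_cone i j v <->
        v = alpha i \/ v = alpha i + alpha j \/ v = alpha j) <->
     m_eq R a i j 3).
Proof.
move=> schemeC _ rootsR a i j ij; have ji : j != i by rewrite eq_sym.
have roots_cartan : (forall v, R a v /\ in_cone i j v <-> A2_positive i j v) ->
    C a i j = -1 /\ C a j i = -1.
  move=> H; split; first exact: (A2_roots_cartan schemeC rootsR ij H).
  apply: (A2_roots_cartan schemeC rootsR ji) => v.
  by rewrite in_coneC A2_positiveC.
split; split.
- move=> [cij cji]; exact: (cartan_m1_roots schemeC rootsR ij cij cji).
- exact: roots_cartan.
- exact: A2_roots_m3 ij.
- move=> /(m3_cartan schemeC rootsR ij) [cij cji].
  exact: (cartan_m1_roots schemeC rootsR ij cij cji).
Qed.
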